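(* Let $\mathcal H$ be a real Hilbert space, $T:\mathcal H\rightrightarrows\mathcal H$ maximal monotone, and $D:\mathcal H\to\mathcal H$ monotone and continuously differentiable with Lipschitz continuous derivative $D'$. For $u\in\mathcal H$ let $D_{(u)}(x):=D(u)+D'(u)(x-u)$. Let $(s^k)$ and $(u^k)$ be bounded sequences in $\mathcal H$ and $(\rho^k)$ a bounded sequence in $(0,\infty)$. Then the sequence $x^k:=J_{\rho^k(T+D_{(u^k)})}(s^k)$, $k\ge0$, is bounded.
   Context: For a maximal monotone operator $S$, $J_S:=(S+I)^{-1}$ denotes its resolvent. *)

From HB Require Import structures.
From mathcomp Require Import all_boot all_order all_algebra.
From mathcomp Require Import all_classical all_reals.
From mathcomp Require Import topology normedtype derive.
Set Implicit Arguments. Unset Strict Implicit. Unset Printing Implicit Defensive.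
Import Order.TTheory GRing.Theory Num.Theory.
Import numFieldNormedType.Exports.
Local Open Scope ring_scope.
Local Open Scope classical_set_scope.

Definition is_inner_product (R : realType) (H : normedModType R)
  (ip : H -> H -> R) : Prop :=
  [/\ (forall x y, ip x y = ip y x),
      (forall x y z, ip (x + y) z = ip x z + ip y z),
      (forall (a : R) x y, ip (a *: x) y = a * ip x y) &
      (forall x, ip x x = `|x| ^+ 2)].

Definition monotone_op (R : realType) (H : normedModType R)
  (ip : H -> H -> R) (T : H -> set H) : Prop :=
  forall x y u v, T x u -> T y v -> 0 <= ip (x - y) (u - v).

Definition maximal_monotone (R : realType) (H : normedModType R)
  (ip : H -> H -> R) (T : H -> set H) : Prop :=
  monotone_op ip T /\
  forall T' : H -> set H, monotone_op ip T' ->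
    (forall x, T x `<=` T' x) -> T' = T.

Definition monotone_map (R : realType) (H : normedModType R)
  (ip : H -> H -> R) (D : H -> H) : Prop :=
  forall x y, 0 <= ip (x - y) (D x - D y).

Definition op_add (R : realType) (H : normedModType R)
  (T : H -> set H) (F : H -> H) : H -> set H :=
  fun x => [set t + F x | t in T x].
Definition op_scale (R : realType) (H : normedModType R)
  (r : R) (S : H -> set H) : H -> set H :=
  fun x => [set r *: y | y in S x].

(* Resolvent J_S := (S + I)^{-1}, as a set-valued map. *)
Definition resolvent (R : realType) (H : normedModType R)
  (S : H -> set H) : H -> set H :=
  fun y => [set x | S x (y - x)].

Definition linearization (R : realType) (H : normedModType R)
  (D : H -> H) (u : H) : H -> H :=
  fun x => D u + 'd D u (x - u).

Definition bounded_seq (R : realType) (H : normedModType R)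
  (s : nat -> H) : Prop := exists M : R, forall k, `|s k| <= M.

From HB Require Import structures.
From mathcomp Require Import all_boot all_order all_algebra.
From mathcomp Require Import all_classical all_reals.
From mathcomp Require Import topology normedtype derive.
From mathcomp Require Import ring lra.
Import Order.TTheory GRing.Theory Num.Theory.
Import numFieldNormedType.Exports.
Local Open Scope ring_scope.
Local Open Scope classical_set_scope.
Set Implicit Arguments. Unset Strict Implicit. Unset Printing Implicit Defensive.

(* Fix a point (y0, v0) of the graph of T, which exists by maximality.  Testing
   the resolvent equation  s - x = rho (t + D u + D'(u)(x - u)),  t in T x,
   against  x - y0  and using monotonicity of T, positivity of D'(u) (inherited
   from monotonicity of D) and the Taylor bound
   <D y0 - D u - D'(u)(y0 - u), w> <= L |y0 - u|^2 |w|  gives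
   |x - y0| <= |s - y0| + rho (L |y0 - u|^2 + |D y0| + |v0|),
   which is uniformly bounded along the sequences. *)

Section InnerProduct.
Variables (R : realType) (H : normedModType R) (ip : H -> H -> R).
Hypothesis ipP : is_inner_product ip.

Lemma ipC x y : ip x y = ip y x. Proof. by case: ipP. Qed.
Lemma ipDl x y z : ip (x + y) z = ip x z + ip y z. Proof. by case: ipP. Qed.
Lemma ipZl a x y : ip (a *: x) y = a * ip x y. Proof. by case: ipP. Qed.
Lemma ip_norm x : ip x x = `|x| ^+ 2. Proof. by case: ipP. Qed.

Lemma ipZr a x y : ip x (a *: y) = a * ip x y.
Proof. by rewrite ipC ipZl ipC. Qed.

Lemma ipNl x y : ip (- x) y = - ip x y.
Proof. by rewrite -scaleN1r ipZl mulN1r. Qed.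

Lemma ipBl x y z : ip (x - y) z = ip x z - ip y z.
Proof. by rewrite ipDl ipNl. Qed.

Lemma ipBr x y z : ip x (y - z) = ip x y - ip x z.
Proof. by rewrite ipC ipBl !(ipC x). Qed.

Lemma ip0l y : ip 0 y = 0.
Proof. by rewrite -(scale0r (0 : H)) ipZl mul0r. Qed.

Lemma ip_le_sqr x y : 2 * ip x y <= `|x| ^+ 2 + `|y| ^+ 2.
Proof.
have := ip_norm (x - y); rewrite ipBl !ipBr !ip_norm (ipC y x).
have := exprn_ge0 2 (normr_ge0 (x - y)); lra.
Qed.

Lemma ip_le_norm x y : ip x y <= `|x| * `|y|.
Proof.
have [->|x0] := eqVneq x 0; first by rewrite ip0l normr0 mul0r.
have [->|y0] := eqVneq y 0; first by rewrite ipC ip0l normr0 mulr0.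
have := ip_le_sqr (`|y| *: x) (`|x| *: y).
rewrite ipZl ipZr !normrZ !normr_id.
have : 0 < `|x| * `|y| by rewrite mulr_gt0 ?normr_gt0.
nra.
Qed.

Lemma ip_ge_norm x y : - (`|x| * `|y|) <= ip x y.
Proof. by rewrite lerNl -ipNl -(normrN x) ip_le_norm. Qed.

Lemma normr_ip_le x y : `|ip x y| <= `|x| * `|y|.
Proof. by rewrite ler_norml ip_le_norm ip_ge_norm. Qed.

Lemma ipl_is_linear w : linear (ip ^~ w).
Proof. by move=> a x y; rewrite ipDl ipZl. Qed.

Definition ipl w : {linear H -> R} :=
  HB.pack (ip ^~ w) (GRing.isLinear.Build _ _ _ _ _ (ipl_is_linear w)).

Lemma ipl_continuous w : continuous (ipl w).
Proof.
apply/bounded_linear_continuous/bounded_funP => r.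
exists (`|r| * `|w|) => x xr /=.
apply: le_trans (normr_ip_le x w) _.
by rewrite ler_wpM2r // (le_trans xr (ler_norm r)).
Qed.

Section Derivative.
Variable D : H -> H.

Lemma is_derive_ip_line a b w t : differentiable D (a + t *: b) ->
  is_derive t 1 (fun s => ip (D (a + s *: b)) w) (ip ('d D (a + t *: b) b) w).
Proof.
move=> dD.
have dline : is_diff t (cst a + ( *:%R^~ b)) (0 + ( *:%R^~ b)) by exact: is_diffD.
have dDt : is_diff ((cst a + ( *:%R^~ b)) t) D ('d D (a + t *: b)) by apply: DiffDef.
have dipl : is_diff (D (a + t *: b)) (ipl w) (ipl w).
  have ipl_cont : continuous (ipl w) by exact: ipl_continuous.
  by apply: DiffDef; [exact: linear_differentiable | exact: diff_lin].
have dphi := is_diff_comp (is_diff_comp dline dDt) dipl.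
apply: DeriveDef; first exact: diff_derivable.
by rewrite deriveE // diff_val /= add0r scale1r.
Qed.

Lemma ip_line_MVT a b w : (forall y, differentiable D y) ->
  exists2 c, c \in `]0, 1[%R &
    ip (D (a + b)) w - ip (D a) w = ip ('d D (a + c *: b) b) w.
Proof.
move=> dD.
have der s := is_derive_ip_line w (dD (a + s *: b)).
have cont : {within `[0, 1], continuous (fun s => ip (D (a + s *: b)) w)}.
  apply: continuous_subspaceT => s.
  by apply/differentiable_continuous/derivable1_diffP; case: (der s).
have [c c01 eq] := MVT ltr01 (fun s _ => der s) cont.
by exists c; rewrite // -[b in LHS]scale1r -[a in X in _ - X]addr0 -(scale0r b) eq subr0 mulr1.
Qed.

Lemma monotone_map_diff_ge0 z w : monotone_map ip D -> differentiable D z ->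
  0 <= ip ('d D z w) w.
Proof.
move=> Dmon dDz.
have dphi := @is_derive_ip_line z w w 0.
rewrite scale0r addr0 in dphi; have {}dphi := dphi dDz.
rewrite -(@derive_val _ _ _ _ _ _ _ dphi); apply: limr_ge; first by case: dphi.
near=> h.
have h0 : h != 0 by near: h; exact: nbhs_dnbhs_neq.
have := Dmon (z + h *: w) z.
rewrite addrAC subrr add0r ipZl ipC ipBl /= scale0r addr0 -[h *: 1]/(h * 1) mulr1 addr0.
(* The difference quotient equals (h X) / h^2, nonnegative on both sides of 0. *)
move=> hX; have -> : forall X : R, h^-1 *: X = (h * X) / h ^+ 2.
  by move=> X; rewrite [LHS]/GRing.scale /=; field.
by rewrite divr_ge0 // sqr_ge0.
Unshelve. all: end_near.
Qed.

Lemma ip_taylor_le L u y w : (forall y, differentiable D y) -> 0 <= L ->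
  (forall y z w, `|'d D y w - 'd D z w| <= L * `|y - z| * `|w|) ->
  ip (D y - D u - 'd D u (y - u)) w <= L * `|y - u| ^+ 2 * `|w|.
Proof.
move=> dD L0 Lip.
have [c /[!in_itv] /= /andP [c0 c1]] := ip_line_MVT u (y - u) w dD.
rewrite (addrC u) subrK !ipBl => ->; rewrite -ipBl.
apply: le_trans (ip_le_norm _ _) _.
have := Lip (u + c *: (y - u)) u (y - u).
rewrite addrAC subrr add0r normrZ gtr0_norm // => Lc.
apply: ler_wpM2r => //; apply: le_trans Lc _.
have := mulr_ge0 L0 (sqr_ge0 `|y - u|); nra.
Qed.

End Derivative.

Lemma maximal_monotone_graph_nonempty (T : H -> set H) :
  maximal_monotone ip T -> exists y v, T y v.
Proof.
move=> [Tmon Tmax]; apply: contrapT => graph0.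
pose T0 (x : H) := [set v : H | x = 0 /\ v = 0].
have T0mon : monotone_op ip T0 by move=> ? ? ? ? [-> ->] [-> ->]; rewrite subrr ip0l.
have T0T : T0 = T by apply: Tmax => // x v Txv; exfalso; apply: graph0; exists x, v.
by apply: graph0; exists 0, 0; rewrite -T0T.
Qed.

Lemma resolvent_linearization_le (T : H -> set H) (D : H -> H) L u s x y0 v0 r :
  monotone_op ip T -> monotone_map ip D -> (forall y, differentiable D y) ->
  0 <= L -> (forall y z w, `|'d D y w - 'd D z w| <= L * `|y - z| * `|w|) ->
  T y0 v0 -> 0 < r ->
  resolvent (op_scale r (op_add T (linearization D u))) s x ->
  `|x - y0| <= `|s - y0| + r * (L * `|y0 - u| ^+ 2 + `|D y0| + `|v0|).
Proof.
move=> Tmon Dmon dD L0 Lip Ty0v0 r0 [_ [t Txt <-] step].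
set a := x - y0; set q := `|y0 - u|.
have eq_s : ip (s - y0) a = ip (s - x) a + `|a| ^+ 2.
  by rewrite -ip_norm -ipDl /a addrA subrK.
have eq_step : ip (s - x) a =
    r * (ip t a + ip (D u) a + ip ('d D u a) a + ip ('d D u (y0 - u)) a).
  rewrite -step /linearization ipZl !ipDl.
  have -> : x - u = a + (y0 - u) by rewrite /a addrA subrK.
  by rewrite linearD ipDl; ring.
have hT : 0 <= ip t a - ip v0 a by rewrite -ipBl ipC Tmon.
have hD' := monotone_map_diff_ge0 a Dmon (dD u).
have hR := ip_taylor_le u y0 a dD L0 Lip; rewrite !ipBl -/q in hR.
have hs := ip_le_norm (s - y0) a.
have hDy := ip_ge_norm (D y0) a; have hv := ip_ge_norm v0 a.
set W := L * q ^+ 2 + `|D y0| + `|v0|.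
have hW : - (W * `|a|) <=
    ip t a + ip (D u) a + ip ('d D u a) a + ip ('d D u (y0 - u)) a by rewrite /W; lra.
have := ler_wpM2l (ltW r0) hW; rewrite -eq_step => hrW.
have W0 : 0 <= W by rewrite /W !addr_ge0 // mulr_ge0 // sqr_ge0.
have := normr_ge0 a; have := normr_ge0 (s - y0); have := mulr_ge0 (ltW r0) W0.
nra.
Qed.

End InnerProduct.

Theorem lemma2p4 (R : realType) (H : completeNormedModType R)
  (ip : H -> H -> R) (T : H -> set H) (D : H -> H)
  (s u : nat -> H) (rho : nat -> R) (x : nat -> H) :
  is_inner_product ip ->
  maximal_monotone ip T ->
  monotone_map ip D ->
  (forall y, differentiable D y) ->
  (exists L : R, forall y z w,
      `|'d D y w - 'd D z w| <= L * `|y - z| * `|w|) ->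
  bounded_seq s -> bounded_seq u ->
  (forall k, 0 < rho k) -> (exists M : R, forall k, rho k <= M) ->
  (forall k, resolvent (op_scale (rho k) (op_add T (linearization D (u k)))) (s k) (x k)) ->
  bounded_seq x.
Proof.
move=> ipP Tmax Dmon dD [L Lip] [Ms hs] [Mu hu] rho_gt0 [Mr hr] hx.
have [y0 [v0 Ty0v0]] := maximal_monotone_graph_nonempty ipP Tmax.
have Lip' y z w : `|'d D y w - 'd D z w| <= `|L| * `|y - z| * `|w|.
  by apply: le_trans (Lip y z w) _; rewrite !ler_wpM2r // ler_norm.
set W := `|L| * (`|y0| + Mu) ^+ 2 + `|D y0| + `|v0|.
exists (Ms + `|y0| + Mr * W + `|y0|) => k.
have := resolvent_linearization_le ipP Tmax.1 Dmon dD (normr_ge0 L) Lip' Ty0v0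
  (rho_gt0 k) (hx k).
have hs0 : `|s k - y0| <= Ms + `|y0| by apply: le_trans (ler_normB _ _) _; rewrite lerD2r.
have hq : `|y0 - u k| <= `|y0| + Mu by apply: le_trans (ler_normB _ _) _; rewrite lerD2l.
have hWk : `|L| * `|y0 - u k| ^+ 2 + `|D y0| + `|v0| <= W.
  rewrite /W !lerD2r ler_wpM2l //.
  by have := normr_ge0 (y0 - u k); nra.
have W0 : 0 <= W by rewrite /W !addr_ge0 // mulr_ge0 // sqr_ge0.
have hrW : rho k * (`|L| * `|y0 - u k| ^+ 2 + `|D y0| + `|v0|) <= Mr * W.
  by apply: le_trans (ler_wpM2r W0 (hr k)); rewrite ler_wpM2l // ltW.
have : `|x k| <= `|x k - y0| + `|y0| by rewrite -{1}(subrK y0 (x k)) ler_normD.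
lra.
Qed.
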